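(* Let $T:V\to V$ be a right-linear closed operator with two-sided linear domain, and let $q(s)=\sum_{j=0}^mb_js^j\not\equiv0$ be a polynomial with real coefficients $b_j$. If $q$ has no zeros in $\sigma_S(T)$, then the operator $q[T]:=\sum_{j=0}^mb_jT^j$, with domain $\operatorname{dom}(T^m)$, is a bijection from $\operatorname{dom}(T^m)$ onto $V$.
   Context: $\mathbb{H}$ denotes the quaternions, $V$ a two-sided Banach space over $\mathbb{H}$, $\mathcal{I}$ the identity. For a right-linear closed operator $T$ on $V$ and $s=s_0+s_1e_1+s_2e_2+s_3e_3\in\mathbb{H}$ with $|s|^2=s_0^2+s_1^2+s_2^2+s_3^2$, let $Q_s(T):=T^2-2s_0T+|s|^2\mathcal{I}$ with domain $\operatorname{dom}(T^2)$. The $S$-resolvent set is $\rho_S(T)=\{s\in\mathbb{H}: Q_s(T):\operatorname{dom}(T^2)\to V\text{ is bijective}\}$ and the $S$-spectrum is $\sigma_S(T)=\mathbb{H}\setminus\rho_S(T)$. *)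

From HB Require Import structures.
From mathcomp Require Import all_boot all_order all_algebra.
From mathcomp Require Import all_classical all_reals all_analysis.
Set Implicit Arguments. Unset Strict Implicit. Unset Printing Implicit Defensive.
Import Order.TTheory GRing.Theory Num.Theory.
Import numFieldNormedType.Exports.
Local Open Scope classical_set_scope.
Local Open Scope ring_scope.

Record quat (R : Type) := Quat { q0 : R; q1 : R; q2 : R; q3 : R }.

Section Quat.
Variable R : realType.

Definition qreal (r : R) : quat R := Quat r 0 0 0.
Definition qzero : quat R := qreal 0.
Definition qone : quat R := qreal 1.

Definition qadd (a b : quat R) : quat R :=
  Quat (q0 a + q0 b) (q1 a + q1 b) (q2 a + q2 b) (q3 a + q3 b).

(* Hamilton product, e1 e2 = e3, e2 e3 = e1, e3 e1 = e2, e_i^2 = -1 *)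
Definition qmul (a b : quat R) : quat R :=
  Quat (q0 a * q0 b - q1 a * q1 b - q2 a * q2 b - q3 a * q3 b)
       (q0 a * q1 b + q1 a * q0 b + q2 a * q3 b - q3 a * q2 b)
       (q0 a * q2 b - q1 a * q3 b + q2 a * q0 b + q3 a * q1 b)
       (q0 a * q3 b + q1 a * q2 b - q2 a * q1 b + q3 a * q0 b).

Definition qnorm2 (s : quat R) : R := q0 s ^+ 2 + q1 s ^+ 2 + q2 s ^+ 2 + q3 s ^+ 2.
Definition qnorm (s : quat R) : R := Num.sqrt (qnorm2 s).

Definition qpow (s : quat R) (n : nat) : quat R := iter n (qmul s) qone.

Definition qeval (p : {poly R}) (s : quat R) : quat R :=
  foldr qadd qzero [seq qmul (qreal p`_j) (qpow s j) | j <- iota 0 (size p)].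
End Quat.

Section TwoSided.
Variables (R : realType) (V : completeNormedModType R).
Variables (lm : quat R -> V -> V) (rm : V -> quat R -> V).

Record two_sided_banach : Prop := {
  lm_addl : forall a b v, lm (qadd a b) v = lm a v + lm b v;
  lm_addr : forall a u v, lm a (u + v) = lm a u + lm a v;
  rm_addl : forall a u v, rm (u + v) a = rm u a + rm v a;
  rm_addr : forall a b v, rm v (qadd a b) = rm v a + rm v b;
  lm_assoc : forall a b v, lm (qmul a b) v = lm a (lm b v);
  rm_assoc : forall a b v, rm v (qmul a b) = rm (rm v a) b;
  lm_rm_comm : forall a b v, rm (lm a v) b = lm a (rm v b);
  lm_real : forall (r : R) v, lm (qreal r) v = r *: v;
  rm_real : forall (r : R) v, rm v (qreal r) = r *: v;
  lm_norm : forall a v, `|lm a v| = qnorm a * `|v|;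
  rm_norm : forall a v, `|rm v a| = qnorm a * `|v|
}.

Definition two_sided_subspace (D : set V) : Prop :=
  D 0 /\ (forall u v, D u -> D v -> D (u + v)) /\
  (forall a u, D u -> D (lm a u)) /\ (forall a u, D u -> D (rm u a)).

Definition right_linear (D : set V) (T : V -> V) : Prop :=
  (forall u v, D u -> D v -> T (u + v) = T u + T v) /\
  (forall a u, D u -> T (rm u a) = rm (T u) a).
End TwoSided.

Section Ops.
Variables (R : realType) (V : completeNormedModType R).

Definition closed_op (D : set V) (T : V -> V) : Prop :=
  forall (u : nat -> V) (x y : V), (forall n, D (u n)) ->
    u n @[n --> \oo] --> x -> T (u n) @[n --> \oo] --> y -> D x /\ T x = y.

Fixpoint dom_pow (D : set V) (T : V -> V) (n : nat) : set V :=
  match n with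
  | 0 => setT
  | n'.+1 => [set v | D v /\ dom_pow D T n' (T v)]
  end.

Definition bij_onto (A : set V) (f : V -> V) : Prop :=
  (forall u v, A u -> A v -> f u = f v -> u = v) /\
  (forall w, exists2 u, A u & f u = w).

Definition Qs (T : V -> V) (s : quat R) (v : V) : V :=
  T (T v) - (2 * q0 s) *: T v + qnorm2 s *: v.

Definition S_resolvent (D : set V) (T : V -> V) : set (quat R) :=
  [set s | bij_onto (dom_pow D T 2) (Qs T s)].

Definition S_spectrum (D : set V) (T : V -> V) : set (quat R) :=
  ~` S_resolvent D T.

Definition poly_op (p : {poly R}) (T : V -> V) (v : V) : V :=
  \sum_(j < size p) p`_j *: iter j T v.
End Ops.

(* A nonzero real polynomial q splits over R into a constant and factors f of
   two kinds, each attached to a complex root z of q: f = X - r with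
   f^2 = Q_s, or f = Q_s irreducible, where s = Re z + (Im z) e1 and
   Q_s = X^2 - 2 s0 X + |s|^2 is the real polynomial with Q_s[T] = Q_s(T).
   As q(s) is the image of q(z) = 0 under the slice embedding C -> H, s is
   not in the S-spectrum, so Q_s[T] : dom(T^2) -> V is bijective.  Now v lies
   in dom(T^(deg f + deg g)) iff v is in dom(T^(deg g)) and g[T] v is in
   dom(T^(deg f)), and there (fg)[T] = f[T] g[T]; hence bijectivity passes to
   products, and, by additivity of f[T], from f[T]^2 back to f[T]. *)
From mathcomp Require Import all_boot all_order all_algebra.
From mathcomp Require Import all_classical all_reals all_analysis.
From mathcomp Require Import complex ring lra zify.
Set Implicit Arguments. Unset Strict Implicit. Unset Printing Implicit Defensive.
Import Order.TTheory GRing.Theory Num.Theory.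
Import numFieldNormedType.Exports.
Local Open Scope classical_set_scope.
Local Open Scope ring_scope.

Lemma predn_size_mul (R : idomainType) (p r : {poly R}) : p != 0 -> r != 0 ->
  (size (p * r)).-1 = ((size p).-1 + (size r).-1)%N.
Proof.
move=> p_neq0 r_neq0; rewrite size_mul //.
by move: p_neq0 r_neq0; rewrite -!size_poly_gt0; lia.
Qed.

Lemma size_ltn_mulr (R : idomainType) (h f : {poly R}) :
  h != 0 -> (1 < size f)%N -> (size h < size (h * f)%R)%N.
Proof.
move=> h_neq0 lt_1_f; have f_neq0 : f != 0 by rewrite -size_poly_gt0 ltnW.
by rewrite size_mul //; move: h_neq0; rewrite -size_poly_gt0; lia.
Qed.

Section ComplexSlice.
Variable R : realType.
Local Notation C := (complex R).
Local Open Scope complex_scope.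
Local Notation toC := (real_complex R).

Definition quat_of_complex (z : C) : quat R := Quat (complex.Re z) (complex.Im z) 0 0.
Local Notation qc := quat_of_complex.

Lemma qmul_complex (z w : C) : qmul (qc z) (qc w) = qc (z * w).
Proof. by case: z w => a b [c d]; congr Quat => /=; ring. Qed.

Lemma qreal_complex (r : R) : qreal r = qc r%:C.
Proof. by []. Qed.

Lemma qpow_complex z j : qpow (qc z) j = qc (z ^+ j).
Proof. by elim: j => [|j IHj]; rewrite ?expr0 // exprS -qmul_complex -IHj. Qed.

Lemma foldr_qadd_complex (I : Type) (s : seq I) (F : I -> C) :
  foldr (@qadd R) (qzero R) [seq qc (F i) | i <- s] = qc (\sum_(i <- s) F i).
Proof.
elim: s => [|i s IHs]; rewrite ?big_nil ?big_cons //= IHs.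
by case: (F i) => a b; case: (\sum_(j <- s) F j) => c d; congr Quat => /=; ring.
Qed.

Lemma qeval_complex (q : {poly R}) z : qeval q (qc z) = qc (map_poly toC q).[z].
Proof.
rewrite /qeval (eq_map (g := fun j => qc ((q`_j)%:C * z ^+ j))); last first.
  by move=> j; rewrite qpow_complex qreal_complex qmul_complex.
rewrite foldr_qadd_complex horner_coef size_map_poly.
rewrite -(big_mkord xpredT (fun j => (map_poly toC q)`_j * z ^+ j)).
by rewrite /index_iota subn0; apply/congr1/eq_bigr => j _; rewrite coef_map.
Qed.

Definition Qs_poly (s : quat R) : {poly R} :=
  'X^2 - (2 * q0 s) *: 'X + (qnorm2 s)%:P.

Lemma size_Qs_poly s : size (Qs_poly s) = 3%N.
Proof.
rewrite /Qs_poly -addrA size_addl ?size_polyXn //.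
rewrite (leq_ltn_trans (size_polyD _ _)) // gtn_max size_polyC.
by rewrite size_polyN (leq_ltn_trans (size_scale_leq _ _)) ?size_polyX //; case: (_ != 0).
Qed.

Lemma Qs_poly_real (r : R) : Qs_poly (qreal r) = ('X - r%:P) ^+ 2.
Proof.
rewrite /Qs_poly /qnorm2 /= expr0n /= !addr0 -mul_polyC polyCM rmorphXn /=.
by rewrite polyC_natr; ring.
Qed.

Lemma Qs_poly_complex z :
  map_poly toC (Qs_poly (qc z)) = ('X - z^*%:P) * ('X - z%:P).
Proof.
rewrite /Qs_poly /qnorm2 rmorphD rmorphB /= map_polyXn map_polyZ map_polyX map_polyC /=.
have -> : toC (2 * complex.Re z) = z^* + z.
  by case: z => a b; congr Complex => /=; ring.
have -> : toC (qnorm2 (qc z)) = z^* * z.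
  by case: z => a b; rewrite /qnorm2; congr Complex => /=; ring.
by rewrite -mul_polyC polyCD polyCM; ring.
Qed.

Lemma real_poly_factor (q : {poly R}) z : root (map_poly toC q) z ->
  exists2 f : {poly R}, f %| q &
    (1 < size f)%N /\ (f = Qs_poly (qc z) \/ f * f = Qs_poly (qc z)).
Proof.
move=> qz0; have [Imz0|Imz_neq0] := eqVneq (complex.Im z) 0.
  have z_real : z = (complex.Re z)%:C by case: z Imz0 {qz0} => a b /= ->.
  exists ('X - (complex.Re z)%:P); last first.
    by rewrite size_XsubC; split=> //; right; rewrite -expr2 -Qs_poly_real z_real.
  rewrite dvdp_XsubCl; apply/eqP/complexI.
  by rewrite -horner_map /= -z_real; apply/eqP.
exists (Qs_poly (qc z)); last by rewrite size_Qs_poly; split=> //; left.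
have conj_neq : z^* != z.
  case: z Imz_neq0 {qz0} => a b /= b0; apply/negP; rewrite eq_complex /= eqxx /=.
  by move=> /eqP ?; lra.
have qconj0 : root (map_poly toC q) z^*.
  rewrite -complex_root_conj -map_poly_comp (eq_map_poly (g := toC)) //.
  by move=> x /=; rewrite /conjc /= oppr0.
rewrite -(dvdp_map toC) Qs_poly_complex Gauss_dvdp; last first.
  by rewrite coprimep_XsubC2 // subr_eq0 eq_sym.
by rewrite !dvdp_XsubCl qz0 qconj0.
Qed.

End ComplexSlice.

Section BijOnto.
Variables (R : realType) (V : completeNormedModType R).

Lemma bij_onto_comp (A B C : set V) (f g h : V -> V) :
  bij_onto A f -> bij_onto B g ->
  (forall v, C v <-> B v /\ A (g v)) -> (forall v, C v -> h v = f (g v)) ->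
  bij_onto C h.
Proof.
move=> [f_inj f_onto] [g_inj g_onto] CE hE; split=> [u v Cu Cv|w].
  have [[Bu Agu] [Bv Agv]] := (proj1 (CE u) Cu, proj1 (CE v) Cv).
  by rewrite !hE // => /f_inj-/(_ Agu Agv)/g_inj; apply.
have [a Aa <-] := f_onto w; have [v Bv gva] := g_onto a.
have Cv : C v by apply/CE; rewrite gva.
by exists v; rewrite // hE // gva.
Qed.

Lemma bij_onto_of_sqr (A C : set V) (f h : V -> V) :
  A 0 -> (forall u v, A u -> A v -> A (u - v)) ->
  (forall u v, A u -> A v -> f (u - v) = f u - f v) ->
  (forall v, C v <-> A v /\ A (f v)) -> (forall v, C v -> h v = f (f v)) ->
  bij_onto C h -> bij_onto A f.
Proof.
move=> A0 AB fB CE hE [h_inj h_onto].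
have f0 : f 0 = 0 by have := fB 0 0 A0 A0; rewrite !subrr.
have C0 : C 0 by apply/CE; rewrite f0.
split=> [u v Au Av fuv|w].
  have fuv0 : f (u - v) = 0 by rewrite fB // fuv subrr.
  have Cuv : C (u - v) by apply/CE; rewrite fuv0; split; first exact: AB.
  by apply/eqP; rewrite -subr_eq0; apply/eqP/h_inj; rewrite // !hE // fuv0 f0.
have [c Cc <-] := h_onto w; have [_ Afc] := proj1 (CE c) Cc.
by exists (f c); rewrite // hE.
Qed.

End BijOnto.

Section PolynomialsOfOperator.
Variables (R : realType) (V : completeNormedModType R) (D : set V) (T : V -> V).
Hypothesis D0 : D 0.
Hypothesis DD : forall u v, D u -> D v -> D (u + v).
Hypothesis DZ : forall (c : R) u, D u -> D (c *: u).
Hypothesis TD : forall u v, D u -> D v -> T (u + v) = T u + T v.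
Hypothesis TZ : forall (c : R) u, D u -> T (c *: u) = c *: T u.

Local Notation dom := (dom_pow D T).
Local Notation pop p := (poly_op p T).

Lemma D_sum n (F : 'I_n -> V) : (forall i, D (F i)) -> D (\sum_(i < n) F i).
Proof. by move=> DF; apply: big_ind. Qed.

Lemma DN u : D u -> D (- u).
Proof. by rewrite -scaleN1r; apply: DZ. Qed.

Lemma DB u v : D u -> D v -> D (u - v).
Proof. by move=> Du /DN; apply: DD. Qed.

Lemma T0 : T 0 = 0.
Proof. by have := @TZ 0 0 D0; rewrite !scale0r. Qed.

Lemma TN u : D u -> T (- u) = - T u.
Proof. by move=> Du; rewrite -scaleN1r TZ // scaleN1r. Qed.

Lemma TB u v : D u -> D v -> T (u - v) = T u - T v.
Proof. by move=> Du Dv; rewrite TD ?TN //; apply: DN. Qed.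

Lemma T_sum n (F : 'I_n -> V) :
  (forall i, D (F i)) -> T (\sum_(i < n) F i) = \sum_(i < n) T (F i).
Proof.
elim: n F => [|n IHn] F DF; first by rewrite !big_ord0 T0.
by rewrite !big_ord_recr TD ?IHn //; apply: D_sum.
Qed.

Lemma dom_powE n v : dom n v <-> forall k, (k < n)%N -> D (iter k T v).
Proof.
elim: n v => [|n IHn] v /=; first by [].
split=> [[Dv /IHn domTv] [|k] // lt_k_n|Dv]; first by rewrite iterSr; apply: domTv.
by split; [apply: (Dv 0%N) | apply/IHn => k lt_k_n; rewrite -iterSr; apply: Dv].
Qed.

Lemma dom_pow_le m n v : (m <= n)%N -> dom n v -> dom m v.
Proof.
by move=> le_m_n /dom_powE Dv; apply/dom_powE => k lt_k_m; apply/Dv/(leq_trans lt_k_m).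
Qed.

Lemma iter_T0 k : iter k T 0 = 0.
Proof. by elim: k => //= k ->; rewrite T0. Qed.

Lemma dom_pow0 n : dom n 0.
Proof. by apply/dom_powE => k _; rewrite iter_T0. Qed.

Lemma iter_TB k u v : dom k u -> dom k v -> iter k T (u - v) = iter k T u - iter k T v.
Proof.
by elim: k u v => [//|k IHk] u v [Du domTu] [Dv domTv]; rewrite !iterSr TB // IHk.
Qed.

Lemma dom_powB n u v : dom n u -> dom n v -> dom n (u - v).
Proof.
move=> domu domv; apply/dom_powE => k lt_k_n.
have [domku domkv] := (dom_pow_le (ltnW lt_k_n) domu, dom_pow_le (ltnW lt_k_n) domv).
by rewrite iter_TB //; apply: DB; [move/dom_powE: domu | move/dom_powE: domv]; apply.
Qed.

Lemma poly_op_widen n (p : {poly R}) v : (size p <= n)%N ->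
  pop p v = \sum_(j < n) p`_j *: iter j T v.
Proof.
move=> le_p_n; rewrite /poly_op (big_ord_widen n (fun j => p`_j *: iter j T v) le_p_n).
by rewrite big_mkcond; apply: eq_bigr => j _; case: ltnP => // ?; rewrite nth_default ?scale0r.
Qed.

Lemma poly_op0 v : pop 0 v = 0.
Proof. by rewrite /poly_op size_poly0 big_ord0. Qed.

Lemma poly_opD (p r : {poly R}) v : pop (p + r) v = pop p v + pop r v.
Proof.
pose n := maxn (size p) (size r).
rewrite !(@poly_op_widen n) ?leq_maxl ?leq_maxr ?(leq_trans (size_polyD _ _)) //.
by rewrite -big_split; apply: eq_bigr => j _; rewrite coefD scalerDl.
Qed.

Lemma poly_opZ c (p : {poly R}) v : pop (c *: p) v = c *: pop p v.
Proof.
rewrite (poly_op_widen _ (size_scale_leq c p)) /poly_op scaler_sumr.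
by apply: eq_bigr => j _; rewrite coefZ scalerA.
Qed.

Lemma poly_op_sum n (F : 'I_n -> {poly R}) v :
  pop (\sum_(i < n) F i) v = \sum_(i < n) pop (F i) v.
Proof. exact: (big_morph (fun p => pop p v) (fun p r => poly_opD p r v) (poly_op0 v)). Qed.

Lemma poly_opC c v : pop c%:P v = c *: v.
Proof. by rewrite (poly_op_widen _ (size_polyC_leq1 c)) big_ord1 coefC. Qed.

Lemma D_poly_op (p : {poly R}) v : dom (size p) v -> D (pop p v).
Proof. by move/dom_powE=> Dv; apply: D_sum => j; apply/DZ/Dv. Qed.

Lemma poly_opMX (r : {poly R}) v : dom (size r) v -> pop (r * 'X) v = T (pop r v).
Proof.
move/dom_powE=> Dv; have le_rX : (size (r * 'X)%R <= (size r).+1)%N.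
  by have [->|/size_mulX ->] := eqVneq r 0; rewrite ?mul0r ?size_poly0.
rewrite (poly_op_widen _ le_rX) big_ord_recl coefMX /= scale0r add0r.
rewrite T_sum => [|j]; last exact/DZ/Dv.
by apply: eq_bigr => j _; rewrite coefMX /= add0n TZ //; apply: Dv.
Qed.

Lemma poly_opMXn i (r : {poly R}) v : dom (i + (size r).-1) v ->
  pop (r * 'X^i) v = iter i T (pop r v).
Proof.
have [->|r_neq0] := eqVneq r 0; first by rewrite mul0r poly_op0 iter_T0.
have r_gt0 : (0 < size r)%N by rewrite size_poly_gt0.
elim: i => [|i IHi] domv; first by rewrite expr0 mulr1.
rewrite exprS mulrCA mulrC poly_opMX ?IHi //=.
  by apply: dom_pow_le _ domv; rewrite addSn.
by apply: dom_pow_le _ domv; rewrite size_mulXn //; lia.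
Qed.

Lemma dom_powSr n v : dom n.+1 v <-> dom n v /\ D (iter n T v).
Proof.
rewrite !dom_powE; split=> [Dv|[Dv Dnv] k]; first by split=> [k lt_k_n|]; apply: Dv; lia.
by rewrite ltnS leq_eqVlt => /predU1P[->|/Dv].
Qed.

Lemma poly_opM (p r : {poly R}) v : dom ((size p).-1 + (size r).-1) v ->
  pop (p * r) v = pop p (pop r v).
Proof.
move=> domv; rewrite -{1}[p]coefK poly_def mulr_suml poly_op_sum.
apply: eq_bigr => i _; rewrite -scalerAl mulrC poly_opZ poly_opMXn //.
by apply: dom_pow_le _ domv; have := ltn_ord i; lia.
Qed.

Lemma dom_pow_lead (s : {poly R}) v :
  s != 0 -> dom (size s).-1 v -> D (pop s v) -> dom (size s) v.
Proof.
move=> s_neq0 domv Dsv; have s_gt0 : (0 < size s)%N by rewrite size_poly_gt0.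
rewrite -(prednK s_gt0); apply/dom_powSr; split=> //.
move: Dsv; rewrite /poly_op -(prednK s_gt0) big_ord_recr /= -/(lead_coef s).
set rest := \sum_(i < _) _ => Dsv.
have Drest : D rest by apply: D_sum => i; apply/DZ; move/dom_powE: domv; apply.
have lc_neq0 : lead_coef s != 0 by rewrite lead_coef_eq0.
have -> : iter (size s).-1 T v =
    (lead_coef s)^-1 *: (rest + lead_coef s *: iter (size s).-1 T v - rest).
  by rewrite addrC addKr scalerK.
by apply/DZ/DB.
Qed.

Lemma dom_pow_poly_op (r : {poly R}) a v : r != 0 ->
  dom (a + (size r).-1) v <-> dom (size r).-1 v /\ dom a (pop r v).
Proof.
move=> r_neq0; have r_gt0 : (0 < size r)%N by rewrite size_poly_gt0.
split=> [domv|[domv]].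
  split; first by apply: dom_pow_le _ domv; rewrite leq_addl.
  apply/dom_powE => i lt_i_a; rewrite -poly_opMXn; last by apply: dom_pow_le _ domv; lia.
  by apply/D_poly_op/(dom_pow_le _ domv); rewrite size_mulXn //; lia.
elim: a => [|a IHa]; first by rewrite add0n.
move=> /dom_powSr[domrv Dr].
have -> : (a.+1 + (size r).-1 = size (r * 'X^a)%R)%N by rewrite size_mulXn //; lia.
have domav := IHa domrv.
apply: dom_pow_lead; first by rewrite mulf_neq0 // monic_neq0 ?monicXn.
  by rewrite size_mulXn //; apply: dom_pow_le _ domav; lia.
by rewrite poly_opMXn.
Qed.

Lemma poly_opB (p : {poly R}) u v : dom (size p).-1 u -> dom (size p).-1 v ->
  pop p (u - v) = pop p u - pop p v.
Proof.
move=> domu domv; rewrite /poly_op -sumrB; apply: eq_bigr => i _.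
have le_i_p : (i <= (size p).-1)%N by have := ltn_ord i; lia.
by rewrite iter_TB ?scalerBr //; apply: dom_pow_le le_i_p _.
Qed.

Lemma poly_opXn i v : pop 'X^i v = iter i T v.
Proof.
rewrite /poly_op size_polyXn big_ord_recr /= coefXn eqxx scale1r big1 ?add0r //.
by move=> j _; rewrite coefXn (ltn_eqF (ltn_ord j)) scale0r.
Qed.

Lemma poly_op_Qs_poly s v : pop (Qs_poly s) v = Qs T s v.
Proof.
rewrite /Qs_poly !poly_opD poly_opC -scaleNr poly_opZ -['X]expr1 !poly_opXn.
by rewrite scaleNr.
Qed.

Definition poly_op_bij (p : {poly R}) := bij_onto (dom (size p).-1) (pop p).

Lemma poly_op_bijC c : c != 0 -> poly_op_bij c%:P.
Proof.
move=> c_neq0; rewrite /poly_op_bij size_polyC c_neq0; split=> [u v _ _|w].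
  by rewrite !poly_opC; apply: scalerI.
by exists (c^-1 *: w); rewrite // poly_opC scalerA mulfV // scale1r.
Qed.

Lemma poly_op_bij_Qs s : S_resolvent D T s -> poly_op_bij (Qs_poly s).
Proof. by rewrite /poly_op_bij size_Qs_poly (funext (poly_op_Qs_poly s)). Qed.

Lemma poly_op_bijM (p r : {poly R}) : p != 0 -> r != 0 ->
  poly_op_bij p -> poly_op_bij r -> poly_op_bij (p * r).
Proof.
move=> p_neq0 r_neq0 bij_p bij_r; rewrite /poly_op_bij predn_size_mul //.
apply: bij_onto_comp bij_p bij_r _ _ => v; first exact: dom_pow_poly_op.
exact: poly_opM.
Qed.

Lemma poly_op_bij_sqr (p : {poly R}) : p != 0 -> poly_op_bij (p * p) -> poly_op_bij p.
Proof.
move=> p_neq0; rewrite /poly_op_bij predn_size_mul //.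
apply: bij_onto_of_sqr => [|u v|u v|v|v].
- exact: dom_pow0.
- exact: dom_powB.
- exact: poly_opB.
- exact: dom_pow_poly_op.
- exact: poly_opM.
Qed.

Lemma poly_op_bij_of_roots (q : {poly R}) : q != 0 ->
  (forall z, root (map_poly (real_complex R) q) z ->
     S_resolvent D T (quat_of_complex z)) ->
  poly_op_bij q.
Proof.
move: {2}(size q) (leqnn (size q)) => n; elim: n q => [|n IHn] q le_q_n q_neq0 roots_res.
  by move: le_q_n; rewrite leqn0 size_poly_eq0 (negPf q_neq0).
have [le_q_1|lt_1_q] := leqP (size q) 1.
  rewrite (size1_polyC le_q_1) polyC_eq0 in q_neq0 *.
  exact: poly_op_bijC.
have [z qz0] : exists z, root (map_poly (real_complex R) q) z.
  by apply/closed_rootP; rewrite size_map_poly neq_ltn lt_1_q orbT.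
have [f /dvdpP[h q_eq] [lt_1_f Qs_f]] := real_poly_factor qz0.
have [h_neq0 f_neq0] : h != 0 /\ f != 0.
  by apply/andP; rewrite -negb_or -mulf_eq0 -q_eq.
rewrite q_eq; apply: poly_op_bijM => //.
  apply: IHn => // [|w hw0]; last by apply: roots_res; rewrite q_eq rmorphM rootM hw0.
  by rewrite -ltnS (leq_trans (size_ltn_mulr h_neq0 lt_1_f)) // -q_eq.
have := poly_op_bij_Qs (roots_res z qz0).
by case: Qs_f => <- //; apply: poly_op_bij_sqr.
Qed.

End PolynomialsOfOperator.

Theorem lemma3p11 (R : realType) (V : completeNormedModType R)
  (lm : quat R -> V -> V) (rm : V -> quat R -> V)
  (HV : two_sided_banach lm rm)
  (D : set V) (T : V -> V)
  (HD : two_sided_subspace lm rm D)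
  (HT : right_linear rm D T)
  (Hcl : closed_op D T)
  (q : {poly R}) (Hq : q != 0)
  (Hz : forall s, S_spectrum D T s -> qeval q s <> qzero R) :
  bij_onto (dom_pow D T (size q).-1) (poly_op q T).
Proof.
have [D0 [DD [_ D_rm]]] := HD; have [TD T_rm] := HT.
have DZ (c : R) u : D u -> D (c *: u) by rewrite -(rm_real HV); apply: D_rm.
have TZ (c : R) u : D u -> T (c *: u) = c *: T u by rewrite -!(rm_real HV); apply: T_rm.
apply: (poly_op_bij_of_roots D0 DD DZ TD TZ Hq) => z /eqP qz0.
by apply: contrapT => /Hz; rewrite qeval_complex qz0.
Qed.
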